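(* Let $H=\{\cdot\mid 1\}$ and let $\mathcal{U}=\mathcal{D}(H)$. Then $H\equiv_\mathcal{U}0$.
   Context: Games are finite partizan games; $1=\{0\mid\cdot\}$, and $\{\cdot\mid 1\}$ is the game with no Left option and sole Right option $1$. $o(G)$ is the misère outcome class (ordered $\mathscr{L}>\mathscr{N}>\mathscr{R}$, $\mathscr{L}>\mathscr{P}>\mathscr{R}$). A universe is a set of games closed under options, disjunctive sums, conjugates, and forming $\{\mathscr{G}^L\mid\mathscr{G}^R\}$ from nonempty finite subsets of it; $\mathcal{D}(\mathcal{A})$ is the smallest universe containing $\mathcal{A}$. $G\equiv_\mathcal{U}H$ means $o(G+X)=o(H+X)$ for all $X\in\mathcal{U}$. *)

From Stdlib Require Import List Bool.
Import ListNotations.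

Inductive game : Type := Game : list game -> list game -> game.

Definition lopts (G : game) : list game := match G with Game L _ => L end.
Definition ropts (G : game) : list game := match G with Game _ R => R end.

Definition zero : game := Game [] [].
Definition one : game := Game [zero] [].

(* Misère play: (Left wins moving first, Right wins moving first).
   A player with no move on their turn wins. *)
Fixpoint wins (G : game) : bool * bool :=
  match G with
  | Game L R =>
      ((match L with [] => true | _ => false end)
         || existsb (fun g => negb (snd (wins g))) L,
       (match R with [] => true | _ => false end)
         || existsb (fun g => negb (fst (wins g))) R)
  end.

Inductive outcome : Type := OL | ON | OP | OR.

Definition o (G : game) : outcome :=
  match wins G with
  | (true, false) => OL
  | (true, true) => ON
  | (false, false) => OP
  | (false, true) => OR
  end.

Fixpoint gadd (G : game) : game -> game :=
  fix gaddG (H : game) : game :=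
    match G, H with
    | Game gl gr, Game hl hr =>
        Game (map (fun g => gadd g H) gl ++ map gaddG hl)
             (map (fun g => gadd g H) gr ++ map gaddG hr)
    end.

Fixpoint gconj (G : game) : game :=
  match G with Game L R => Game (map gconj R) (map gconj L) end.

Definition universe (U : game -> Prop) : Prop :=
  (forall G g, U G -> In g (lopts G) -> U g) /\
  (forall G g, U G -> In g (ropts G) -> U g) /\
  (forall G H, U G -> U H -> U (gadd G H)) /\
  (forall G, U G -> U (gconj G)) /\
  (forall S T, S <> [] -> T <> [] ->
     (forall g, In g S -> U g) -> (forall g, In g T -> U g) -> U (Game S T)).

(* D(A): the smallest universe containing A *)
Definition Dcl (A : game -> Prop) (G : game) : Prop :=
  forall U, universe U -> (forall X, A X -> U X) -> U G.

Definition equivU (U : game -> Prop) (G H : game) : Prop :=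
  forall X, U X -> o (gadd G X) = o (gadd H X).

(** Call a game with no Right option a Right end, and call a Right end Y
    safe if Right can answer every Left move in Y either because the result is
    again a Right end or by moving to a safe Right end.  Left, moving first in
    [1 + Y], then loses: moving [1] to [0] leaves Right to move in the Right
    end Y, and any move in Y is answered in Y.  Games all of whose Right ends
    are safe, and whose Left ends are conjugates of safe Right ends, form a
    universe containing [H = {. | 1}], hence containing D(H).

    For such an X, Left's options in [H + X] are [H + X^L], and Right's are
    [H + X^R] together with [1 + X].  The extra option [1 + X] wins for Right
    exactly when Left loses [1 + X] moving first; if X is a Right end this is
    the safety of X, and otherwise it already implies that Right wins X
    moving first.  By induction, [H + X] and X have the same outcome. *)

From Stdlib Require Import List Bool.
Import ListNotations.

Definition game_ind_In (P : game -> Prop)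
  (f : forall G, (forall g, In g (lopts G) -> P g) ->
       (forall g, In g (ropts G) -> P g) -> P G) : forall G, P G :=
  fix F G :=
    let fix FL l : forall g, In g l -> P g :=
      match l with
      | [] => fun g (Hg : In g []) => False_ind _ Hg
      | x :: t => fun g Hg =>
          match Hg with
          | or_introl e => eq_ind x P (F x) g e
          | or_intror Ht => FL t g Ht
          end
      end in
    match G with Game L R => f (Game L R) (FL L) (FL R) end.

Definition is_nil {A} (l : list A) : bool :=
  match l with [] => true | _ => false end.

Lemma is_nil_map {A B} (f : A -> B) l : is_nil (map f l) = is_nil l.
Proof. destruct l; reflexivity. Qed.

Lemma existsb_map {A B} (f : A -> B) (p : B -> bool) l :
  existsb p (map f l) = existsb (fun x => p (f x)) l.
Proof. induction l as [|a l IH]; simpl; congruence. Qed.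

Lemma existsb_ext_in {A} (p q : A -> bool) l :
  (forall x, In x l -> p x = q x) -> existsb p l = existsb q l.
Proof.
  induction l as [|a l IH]; simpl; intros Hpq; auto.
  rewrite Hpq, IH by auto. reflexivity.
Qed.

Lemma existsb_false_in {A} (p : A -> bool) l :
  (forall x, In x l -> p x = false) -> existsb p l = false.
Proof.
  induction l as [|a l IH]; simpl; intros Hp; auto.
  rewrite Hp, IH by auto. reflexivity.
Qed.

Lemma lopts_gadd G K :
  lopts (gadd G K) = map (fun g => gadd g K) (lopts G) ++ map (gadd G) (lopts K).
Proof. destruct G, K; reflexivity. Qed.

Lemma ropts_gadd G K :
  ropts (gadd G K) = map (fun g => gadd g K) (ropts G) ++ map (gadd G) (ropts K).
Proof. destruct G, K; reflexivity. Qed.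

Lemma lopts_gadd_nil G K : lopts (gadd G K) = [] <-> lopts G = [] /\ lopts K = [].
Proof.
  rewrite lopts_gadd; split.
  - intros [HG HK]%app_eq_nil. split; eapply map_eq_nil; eassumption.
  - intros [-> ->]. reflexivity.
Qed.

Lemma ropts_gadd_nil G K : ropts (gadd G K) = [] <-> ropts G = [] /\ ropts K = [].
Proof.
  rewrite ropts_gadd; split.
  - intros [HG HK]%app_eq_nil. split; eapply map_eq_nil; eassumption.
  - intros [-> ->]. reflexivity.
Qed.

Lemma lopts_gconj G : lopts (gconj G) = map gconj (ropts G).
Proof. destruct G; reflexivity. Qed.

Lemma ropts_gconj G : ropts (gconj G) = map gconj (lopts G).
Proof. destruct G; reflexivity. Qed.

Lemma game_ext G K : lopts G = lopts K -> ropts G = ropts K -> G = K.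
Proof. destruct G, K; simpl; congruence. Qed.

Lemma gadd0l G : gadd zero G = G.
Proof.
  induction G as [G IHL IHR] using game_ind_In.
  apply game_ext; rewrite ?lopts_gadd, ?ropts_gadd; simpl;
    rewrite <- map_id; apply map_ext_in; assumption.
Qed.

Lemma gconjK G : gconj (gconj G) = G.
Proof.
  induction G as [G IHL IHR] using game_ind_In.
  apply game_ext; repeat rewrite ?lopts_gconj, ?ropts_gconj, ?map_map;
    rewrite <- map_id; apply map_ext_in; assumption.
Qed.

Lemma gconj_gadd G K : gconj (gadd G K) = gadd (gconj G) (gconj K).
Proof.
  revert K; induction G as [G IHGl IHGr] using game_ind_In; intros K.
  induction K as [K IHKl IHKr] using game_ind_In.
  apply game_ext;
    repeat rewrite ?lopts_gconj, ?ropts_gconj, ?lopts_gadd, ?ropts_gadd, ?map_app, ?map_map;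
    f_equal; apply map_ext_in; auto.
Qed.

Inductive safe_rend : game -> Prop :=
| SafeRend G :
    ropts G = [] -> (forall g, In g (lopts G) -> right_answers g) -> safe_rend G
with right_answers : game -> Prop :=
| RightAnswersEnd g : ropts g = [] -> right_answers g
| RightAnswersMove g h : In h (ropts g) -> safe_rend h -> right_answers g.

Scheme safe_rend_ind' := Minimality for safe_rend Sort Prop
with right_answers_ind' := Minimality for right_answers Sort Prop.

Lemma safe_rend_ropts G : safe_rend G -> ropts G = [].
Proof. now destruct 1. Qed.

Lemma safe_rend_gadd Y Z : safe_rend Y -> safe_rend Z -> safe_rend (gadd Y Z).
Proof.
  intros HY; revert Z.
  induction HY as [Y hY _ IHY | g hg | g h hgh _ IHh]
    using safe_rend_ind'
    with (P0 := fun g => forall Z, safe_rend Z -> right_answers (gadd g Z));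
    intros Z HZ.
  - induction HZ as [Z hZ HZ IHZ | m hm | m h hmh _ IHh]
      using safe_rend_ind'
      with (P0 := fun m => right_answers (gadd Y m)).
    + constructor; [now apply ropts_gadd_nil |].
      intros x Hx; rewrite lopts_gadd in Hx.
      apply in_app_or in Hx as [Hx | Hx]; apply in_map_iff in Hx as [y [<- Hy]].
      * apply IHY; [assumption | now constructor].
      * now apply IHZ.
    + now constructor; apply ropts_gadd_nil.
    + apply (RightAnswersMove _ (gadd Y h)); [| assumption].
      rewrite ropts_gadd; apply in_or_app; right; now apply in_map.
  - constructor; apply ropts_gadd_nil; auto using safe_rend_ropts.
  - apply (RightAnswersMove _ (gadd h Z)); [| now apply IHh].
    rewrite ropts_gadd; apply in_or_app; left; now apply (in_map (fun x => gadd x Z)).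
Qed.

Inductive safe_ends : game -> Prop :=
| SafeEnds G :
    (ropts G = [] -> safe_rend G) ->
    (lopts G = [] -> safe_rend (gconj G)) ->
    (forall g, In g (lopts G) -> safe_ends g) ->
    (forall g, In g (ropts G) -> safe_ends g) ->
    safe_ends G.

Lemma safe_ends_gadd G K : safe_ends G -> safe_ends K -> safe_ends (gadd G K).
Proof.
  intros HG; revert K.
  induction HG as [G hGr hGl HGl IHGl HGr IHGr]; intros K HK.
  induction HK as [K hKr hKl HKl IHKl HKr IHKr].
  assert (HG : safe_ends G) by now constructor.
  assert (HK : safe_ends K) by now constructor.
  constructor.
  - intros [? ?]%ropts_gadd_nil; auto using safe_rend_gadd.
  - intros [? ?]%lopts_gadd_nil; rewrite gconj_gadd; auto using safe_rend_gadd.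
  - intros x Hx; rewrite lopts_gadd in Hx.
    apply in_app_or in Hx as [Hx | Hx]; apply in_map_iff in Hx as [y [<- Hy]]; auto.
  - intros x Hx; rewrite ropts_gadd in Hx.
    apply in_app_or in Hx as [Hx | Hx]; apply in_map_iff in Hx as [y [<- Hy]]; auto.
Qed.

Lemma safe_ends_gconj G : safe_ends G -> safe_ends (gconj G).
Proof.
  induction 1 as [G hGr hGl HGl IHGl HGr IHGr].
  constructor; rewrite ?lopts_gconj, ?ropts_gconj.
  - intros Hl%map_eq_nil; auto.
  - intros Hr%map_eq_nil; rewrite gconjK; auto.
  - intros x Hx; apply in_map_iff in Hx as [y [<- Hy]]; auto.
  - intros x Hx; apply in_map_iff in Hx as [y [<- Hy]]; auto.
Qed.

Lemma safe_ends_universe : universe safe_ends.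
Proof.
  split; [| split; [| split; [| split]]].
  - intros G g []; auto.
  - intros G g []; auto.
  - exact safe_ends_gadd.
  - exact safe_ends_gconj.
  - intros S T HS HT HSU HTU; constructor; simpl; auto; contradiction.
Qed.

Lemma safe_rend_zero : safe_rend zero.
Proof. constructor; simpl; tauto. Qed.

Lemma safe_ends_zero : safe_ends zero.
Proof. constructor; simpl; auto using safe_rend_zero; tauto. Qed.

Lemma safe_ends_one : safe_ends one.
Proof.
  constructor; simpl; try discriminate.
  - intros _; constructor; [reflexivity |].
    intros g [<- | []]; now constructor.
  - intros g [<- | []]; exact safe_ends_zero.
  - tauto.
Qed.

Lemma safe_ends_H : safe_ends (Game [] [one]).
Proof.
  constructor; simpl; try discriminate.
  - intros _; constructor; [reflexivity |].
    intros g [<- | []]; apply (RightAnswersMove _ zero); simpl; auto using safe_rend_zero.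
  - tauto.
  - intros g [<- | []]; exact safe_ends_one.
Qed.

Lemma Dcl_H_safe_ends X : Dcl (fun Y => Y = Game [] [one]) X -> safe_ends X.
Proof.
  intros HX; apply HX; [exact safe_ends_universe | intros Y ->; exact safe_ends_H].
Qed.

Definition lwins G := fst (wins G).
Definition rwins G := snd (wins G).

Lemma lwins_opts G :
  lwins G = is_nil (lopts G) || existsb (fun g => negb (rwins g)) (lopts G).
Proof. now destruct G. Qed.

Lemma rwins_opts G :
  rwins G = is_nil (ropts G) || existsb (fun g => negb (lwins g)) (ropts G).
Proof. now destruct G. Qed.

Lemma safe_rend_lloses_one_gadd Y : safe_rend Y -> lwins (gadd one Y) = false.
Proof.
  induction 1 as [Y hY _ IHY | g hg | g h hgh _ IHh]
    using safe_rend_ind'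
    with (P0 := fun g => rwins (gadd one g) = true).
  - rewrite lwins_opts, lopts_gadd; simpl; rewrite gadd0l, rwins_opts, hY; simpl.
    apply existsb_false_in; intros x Hx.
    apply in_map_iff in Hx as [y [<- Hy]]; now rewrite IHY.
  - now rewrite rwins_opts, ropts_gadd, hg.
  - rewrite rwins_opts, ropts_gadd; simpl; apply orb_true_intro; right.
    apply existsb_exists; exists (gadd one h); split; [now apply in_map |].
    now rewrite IHh.
Qed.

Lemma rwins_of_lloses_one_gadd X : lwins (gadd one X) = false -> rwins X = true.
Proof.
  rewrite lwins_opts, lopts_gadd; simpl; rewrite gadd0l.
  now destruct (rwins X).
Qed.

Lemma wins_H_gadd X : safe_ends X -> wins (gadd (Game [] [one]) X) = wins X.
Proof.
  induction 1 as [X hXr _ _ IHl _ IHr].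
  rewrite (surjective_pairing (wins X)), (surjective_pairing (wins (gadd _ X))).
  change (fst (wins ?G)) with (lwins G); change (snd (wins ?G)) with (rwins G).
  f_equal.
  - rewrite !lwins_opts, lopts_gadd; simpl; rewrite is_nil_map, existsb_map.
    f_equal; apply existsb_ext_in; intros x Hx.
    unfold rwins; now rewrite IHl.
  - rewrite !rwins_opts, ropts_gadd; cbn [ropts map app is_nil existsb orb].
    rewrite existsb_map.
    rewrite (existsb_ext_in _ (fun g => negb (lwins g)) (ropts X))
      by (intros x Hx; unfold lwins; now rewrite IHr).
    destruct (ropts X) as [| r R] eqn:E; cbn [is_nil orb].
    + now rewrite safe_rend_lloses_one_gadd by auto.
    + destruct (lwins (gadd one X)) eqn:Hone; [reflexivity |].
      apply rwins_of_lloses_one_gadd in Hone.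
      now rewrite rwins_opts, E in Hone.
Qed.

Theorem mainTheorem18 :
  let H := Game [] [one] in
  equivU (Dcl (fun X => X = H)) H zero.
Proof.
  intros H X HX; unfold o.
  now rewrite gadd0l, wins_H_gadd by now apply Dcl_H_safe_ends.
Qed.
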